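(* Let $n,s$ be integers with $(n+1)/3\le s\le n/2$ and let $L=[s]=\{1,\ldots,s\}$. If $\mathcal{F}\subseteq 2^{[n]}$ is $L$-close Sperner, then $$|\mathcal{F}|\le\sum_{i=3s-n}^{s}\binom{n}{i}.$$
   Context: $[n]=\{1,\ldots,n\}$ and $2^{[n]}$ is the family of all subsets of $[n]$. For a set $L$ of positive integers, $\mathcal{F}\subseteq2^{[n]}$ is $L$-close Sperner if for all distinct $A,B\in\mathcal{F}$, the skew distance $\mathrm{sd}(A,B)=\min\{|A\setminus B|,|B\setminus A|\}$ lies in $L$. *)

From mathcomp Require Import all_boot.
Set Implicit Arguments. Unset Strict Implicit. Unset Printing Implicit Defensive.

(* Ground set [n] is modelled by 'I_n (elements 0..n-1); subsets are {set 'I_n}. *)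
Definition skew_dist (n : nat) (A B : {set 'I_n}) : nat :=
  minn #|A :\: B| #|B :\: A|.

Definition close_sperner (n : nat) (L : pred nat) (F : {set {set 'I_n}}) : Prop :=
  forall A B, A \in F -> B \in F -> A != B -> skew_dist A B \in L.

Definition range1 (s : nat) : pred nat := fun d => (1 <= d <= s).

From mathcomp Require Import all_boot all_algebra zify ring.
Set Implicit Arguments. Unset Strict Implicit. Unset Printing Implicit Defensive.

(* If the smallest level k of F lies below s, replace it by its upper shadow: members of
   size k+1 <= s are at skew distance at most s from everything, so the family stays
   [s]-close Sperner, and since k+1 <= n-k double counting shows that |F| does not drop.
   Doing this for F and then for the family of complements, we may assume that every
   member of F has size in [s, n-s].
   Now let g(t) = (t-1)(t-2)...(t-s). The matrix (g |A \ B|) indexed by F x F is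
   nonsingular: ordered by size it is triangular with diagonal g(0) <> 0. Its row
   X |-> g |A \ X| is a polynomial of degree s in |A ∩ X|, hence a combination of the
   inclusion vectors X |-> [S ⊆ X] with |S| <= s. As all |X| lie in [s, n-s], the
   polynomial y |-> prod_(l = s .. n-s) (|S| + y - l) vanishes at y = |X \ S| whenever
   S ⊆ X; for |S| < 3s-n this expresses the inclusion vector of S through those of
   supersets of S of size at most s. The rank, |F|, is thus at most the number of sets
   with size in [3s-n, s]. *)

Lemma sum_nat_bool_card (T : finType) (P Q : pred T) :
  \sum_(x | P x) (Q x : nat) = #|[set x | P x && Q x]|.
Proof. by rewrite -sum1dep_card big_mkcondr; apply: eq_bigr => x _; case: (Q x). Qed.

Lemma sum_subsets_cap (T : finType) (B X : {set T}) r :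
  \sum_(U : {set T} | (U \subset B) && (#|U| == r)) (U \subset X : nat) = 'C(#|B :&: X|, r).
Proof.
rewrite sum_nat_bool_card -cards_draws; apply: eq_card => U.
by rewrite !inE subsetI andbAC.
Qed.

Lemma leq_cardsD_swap (T : finType) (A B : {set T}) :
  #|A| <= #|B| -> #|A :\: B| <= #|B :\: A|.
Proof. by move=> le_AB; rewrite !cardsD setIC leq_sub2r. Qed.

Section UpperShadow.
Variable T : finType.

Definition antichain (F : {set {set T}}) :=
  {in F &, forall A B : {set T}, A \subset B -> A = B}.

Definition upshadow (H : {set {set T}}) k :=
  [set B : {set T} | (#|B| == k.+1) && [exists A in H, A \subset B]].

Lemma upshadow_double_count (H : {set {set T}}) k : {in H, forall A : {set T}, #|A| = k} ->
  #|H| * (#|T| - k) <= #|upshadow H k| * k.+1.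
Proof.
move=> Hk; rewrite -!sum_nat_const.
have cover A : A \in H -> #|T| - k <= \sum_(B in upshadow H k) (A \subset B : nat).
  move=> AH; rewrite sum_nat_bool_card -(Hk A AH) -(cardsC A) addKn.
  rewrite -(@card_in_imset _ _ (fun x => x |: A)); last first.
    move=> x y; rewrite !inE => xA yA /setP /(_ x); rewrite !inE eqxx /=.
    by rewrite (negbTE xA) orbF => /esym /eqP.
  apply/subset_leq_card/subsetP => _ /imsetP[x xA ->]; rewrite in_setC in xA.
  rewrite !inE subsetUr cardsU1 xA Hk //= add1n eqxx /=.
  by rewrite andbT; apply/existsP; exists A; rewrite AH subsetUr.
have covered B : B \in upshadow H k -> \sum_(A in H) (A \subset B : nat) <= k.+1.
  rewrite inE => /andP[/eqP cB _]; rewrite sum_nat_bool_card -binSn -cB -cards_draws.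
  by apply/subset_leq_card/subsetP => A; rewrite !inE => /andP[AH ->]; rewrite Hk ?eqxx.
by rewrite (leq_trans (leq_sum _ cover)) // exchange_big leq_sum.
Qed.

Lemma upshadowP (H : {set {set T}}) k B : B \in upshadow H k ->
  #|B| = k.+1 /\ exists2 A, A \in H & A \subset B.
Proof. by rewrite inE => /andP[/eqP cB /exists_inP[A AH AB]]; split; last exists A. Qed.

Definition level (F : {set {set T}}) k := [set A in F | #|A| == k].

Definition raise (F : {set {set T}}) k := (F :\: level F k) :|: upshadow (level F k) k.

Lemma mem_raise F k B :
  (B \in raise F k) = (B \in F) && (#|B| != k) || (B \in upshadow (level F k) k).
Proof.
rewrite /raise in_setU in_setD [B \in level F k]inE.
by case: (B \in F); rewrite /= ?andbT ?andbF.
Qed.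

Lemma raise_card_bounds (F : {set {set T}}) k u : k < u ->
  {in F, forall A : {set T}, k <= #|A| <= u} -> {in raise F k, forall A : {set T}, k < #|A| <= u}.
Proof.
move=> lt_ku bF A; rewrite mem_raise => /orP[/andP[AF nA]|/upshadowP[-> _]]; last first.
  by rewrite ltnSn.
by case/andP: (bF A AF) => geA ->; rewrite andbT ltn_neqAle eq_sym nA.
Qed.

Variables (F : {set {set T}}) (k : nat).
Hypothesis antiF : antichain F.

Lemma upshadow_level_notin B : B \in upshadow (level F k) k -> B \notin F.
Proof.
case/upshadowP=> cB [A]; rewrite inE => /andP[AF /eqP cA] AB.
by apply/negP => BF; move: cA; rewrite (antiF AF BF AB) cB; lia.
Qed.

Lemma raise_antichain : {in F, forall A : {set T}, k <= #|A|} -> antichain (raise F k).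
Proof.
move=> geF B C; rewrite !mem_raise => /orP[/andP[BF nB]|/upshadowP[cB [A AlF AB]]].
- case/orP=> [/andP[CF nC]|/upshadowP[cC _]] BC; first exact: antiF.
  by apply/eqP; rewrite eqEcard BC cC ltn_neqAle eq_sym nB geF.
- move: AlF; rewrite inE => /andP[AF /eqP cA].
  case/orP=> [/andP[CF nC]|/upshadowP[cC _]] BC.
    by move: nC; rewrite -(antiF AF CF (subset_trans AB BC)) cA eqxx.
  by apply/eqP; rewrite eqEcard BC cB cC /=.
Qed.

Lemma card_raise : k < #|T| - k -> #|F| <= #|raise F k|.
Proof.
move=> lt_k.
have levelF : level F k \subset F by apply/subsetP => A; rewrite inE => /andP[].
have disj : (F :\: level F k) :&: upshadow (level F k) k = set0.
  apply/setP => B; rewrite in_set0 in_setI in_setD -andbA; apply/negP => /and3P[_ BF BU].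
  by move: (upshadow_level_notin BU); rewrite BF.
have card_level : #|level F k| <= #|upshadow (level F k) k|.
  have uniform : {in level F k, forall A : {set T}, #|A| = k}.
    by move=> A; rewrite inE => /andP[_ /eqP].
  rewrite -(@leq_pmul2r (#|T| - k)) ?(leq_trans _ lt_k) //.
  by rewrite (leq_trans (upshadow_double_count uniform)) ?leq_mul2l ?lt_k ?orbT.
rewrite /raise cardsU disj cards0 subn0 -(cardsID (level F k) F) (setIidPr levelF).
by rewrite addnC leq_add2l.
Qed.
End UpperShadow.

Section CloseSperner.
Variables n s : nat.
Implicit Types (A B : {set 'I_n}) (F : {set {set 'I_n}}).

Lemma skew_dist_range1 A B : (skew_dist A B \in range1 s) =
  [&& ~~ (A \subset B), ~~ (B \subset A) & (#|A :\: B| <= s) || (#|B :\: A| <= s)].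
Proof. by rewrite /skew_dist unfold_in /= leq_min geq_min !card_gt0 !setD_eq0 andbA. Qed.

Lemma close_sperner_antichain F : close_sperner (range1 s) F -> antichain F.
Proof.
move=> csF A B AF BF AB; apply/eqP; apply: contraT => nAB.
by move: (csF A B AF BF nAB); rewrite skew_dist_range1 AB.
Qed.

Lemma close_sperner_compl F :
  close_sperner (range1 s) F -> close_sperner (range1 s) [set ~: A | A in F].
Proof.
move=> csF _ _ /imsetP[A AF ->] /imsetP[B BF ->] nAB.
have CD X Y : ~: X :\: ~: Y = Y :\: X by rewrite setDE setCK setIC -setDE.
rewrite skew_dist_range1 !setCS !CD -skew_dist_range1 csF //.
by apply: contraNneq nAB => ->.
Qed.

Lemma raise_close_sperner F k : k < s -> {in F, forall A, k <= #|A|} ->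
  close_sperner (range1 s) F -> close_sperner (range1 s) (raise F k).
Proof.
move=> lt_ks geF csF B C BR CR nBC.
have anti := raise_antichain (close_sperner_antichain csF) geF.
have small X Y : X \in upshadow (level F k) k -> #|X :\: Y| <= s.
  by case/upshadowP=> cX _; rewrite (leq_trans (subset_leq_card (subsetDl X Y))) ?cX.
rewrite skew_dist_range1; apply/and3P; split.
- by apply: contra nBC => BC; rewrite (anti B C BR CR BC).
- by apply: contra nBC => CB; rewrite (anti C B CR BR CB).
move: BR CR; rewrite !mem_raise => /orP[/andP[BF _]|/small->//].
case/orP=> [/andP[CF _]|/small->]; last by rewrite orbT.
by move: (csF B C BF CF nBC); rewrite skew_dist_range1 => /and3P[].
Qed.

Lemma close_sperner_raise F u : 2 * s <= n -> s <= u -> close_sperner (range1 s) F ->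
  {in F, forall A, #|A| <= u} ->
  exists G, [/\ close_sperner (range1 s) G, #|F| <= #|G| & {in G, forall A, s <= #|A| <= u}].
Proof.
move=> le_2sn le_su csF leF.
suff raise_from m G : close_sperner (range1 s) G -> {in G, forall A, s - m <= #|A| <= u} ->
    exists G', [/\ close_sperner (range1 s) G', #|G| <= #|G'| & {in G', forall A, s <= #|A| <= u}].
  by apply: (raise_from s) => // A /leF; rewrite subnn.
elim: m G => [|m IH] G csG bG; first by exists G; split=> // A /bG; rewrite subn0.
have [le_sm|lt_ms] := leqP s m.
  by apply: IH => // A /bG; rewrite (_ : s - m.+1 = s - m) //; lia.
have lt_ks : s - m.+1 < s by lia.
have geG : {in G, forall A, s - m.+1 <= #|A|} by move=> A /bG /andP[].
have bR : {in raise G (s - m.+1), forall A, s - m <= #|A| <= u}.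
  have lt_ku : s - m.+1 < u by lia.
  by move=> A /(raise_card_bounds lt_ku bG); rewrite (_ : (s - m.+1).+1 = s - m) //; lia.
have [G' [csG' le_G' bG']] := IH _ (raise_close_sperner lt_ks geG csG) bR.
exists G'; split=> //; apply: leq_trans le_G'.
by apply: card_raise (close_sperner_antichain csG) _; rewrite card_ord; lia.
Qed.

Lemma close_sperner_middle_levels F : 2 * s <= n -> close_sperner (range1 s) F ->
  exists G, [/\ close_sperner (range1 s) G, #|F| <= #|G| & {in G, forall A, s <= #|A| <= n - s}].
Proof.
move=> le_2sn csF.
have leF : {in F, forall A, #|A| <= n} by move=> A _; rewrite (leq_trans (max_card A)) ?card_ord.
have le_sn : s <= n by lia.
have [F1 [csF1 le_F1 bF1]] := close_sperner_raise le_2sn le_sn csF leF.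
have leF1C : {in [set ~: A | A in F1], forall A, #|A| <= n - s}.
  move=> _ /imsetP[A AF1 ->]; rewrite cardsCs setCK card_ord.
  by case/andP: (bF1 A AF1) => /leq_sub2l.
have le_s_ns : s <= n - s by lia.
have [G [csG le_G bG]] := close_sperner_raise le_2sn le_s_ns (close_sperner_compl csF1) leF1C.
by exists G; split=> //; rewrite (leq_trans le_F1) // -(card_imset _ (@setC_inj _)).
Qed.
End CloseSperner.

Lemma mul_bin_split y r : y * 'C(y, r) = r * 'C(y, r) + r.+1 * 'C(y, r.+1).
Proof.
rewrite mul_bin_left -mulnDl; have [le_ry|lt_yr] := leqP r y; first by rewrite addnC subnK.
by rewrite bin_small // !muln0.
Qed.

Section BinomialBasis.
Import GRing.Theory.
Local Open Scope ring_scope.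
Variable R : comNzRingType.

Lemma prod_affine_bin_expansion (I : Type) (r : seq I) (a : R) (c : I -> R) :
  exists q : nat -> R, forall y : nat,
    \prod_(i <- r) (a * y%:R + c i) = \sum_(k < (size r).+1) q k * 'C(y, k)%:R.
Proof.
elim: r => [|i r [q IH]]; first by exists (fun=> 1) => y; rewrite big_nil big_ord1 bin0 mul1r.
pose m := size r.
(* [(a y + c) C(y,k) = (a k + c) C(y,k) + a (k+1) C(y,k+1)] shifts the coefficients up by one. *)
exists (fun k => (if (k < m.+1)%N then q k * (a * k%:R + c i) else 0) +
          (if k is k'.+1 then q k' * (a * k%:R) else 0)).
move=> y; rewrite big_cons IH mulr_sumr /=.
under eq_bigr => k _.
  have := congr1 (fun x : nat => x%:R : R) (mul_bin_split y k); rewrite natrD !natrM => e.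
  rewrite (_ : _ * _ = q k * (a * k%:R + c i) * 'C(y, k)%:R +
                      q k * (a * k.+1%:R) * 'C(y, k.+1)%:R); last first.
    by rewrite mulrCA mulrDl -(mulrA a) e; ring.
  over.
under [RHS]eq_bigr do rewrite mulrDl.
rewrite !big_split /=; congr (_ + _).
  by rewrite [RHS]big_ord_recr /= ltnn mul0r addr0; apply: eq_bigr => k _; rewrite ltn_ord.
by rewrite [RHS]big_ord_recl /= mul0r add0r; apply: eq_bigr => k _; rewrite /bump /= add1n.
Qed.

Lemma bin_expansion_coef0 m (q P : nat -> R) :
  (forall y, P y = \sum_(k < m.+1) q k * 'C(y, k)%:R) -> q 0%N = P 0%N.
Proof.
move=> ->; rewrite big_ord_recl bin0 mulr1 big1 ?addr0 // => k _.
by rewrite bin0n mulr0.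
Qed.
End BinomialBasis.

Section Inclusion.
Import GRing.Theory Num.Theory.
Local Open Scope ring_scope.
Variables (R : numFieldType) (T : finType) (F : {set {set T}}).

Definition root_prod lo hi (t : nat) : R := \prod_(lo <= l < hi.+1) (t%:R - l%:R).

Lemma root_prod_eq0 lo hi t : (lo <= t <= hi)%N -> root_prod lo hi t = 0.
Proof.
move=> /andP[le_lt le_th]; apply/eqP; rewrite prodf_seq_eq0; apply/hasP.
by exists t; rewrite ?mem_index_iota ?le_lt ?ltnS //= subrr.
Qed.

Lemma root_prod_neq0 lo hi t : (t < lo)%N -> root_prod lo hi t != 0.
Proof.
move=> lt_tl; rewrite prodf_seq_neq0; apply/allP => l; rewrite mem_index_iota => /andP[le_ll _].
by rewrite /= subr_eq0 eqr_nat neq_ltn (leq_trans lt_tl).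
Qed.

Definition row_of (f : {set T} -> R) : 'rV[R]_#|F| := \row_j f (enum_val j).

Definition incl_row (S : {set T}) := row_of (fun X => (S \subset X)%:R).

Definition band lo hi := [set S : {set T} | lo <= #|S| <= hi]%N.

Lemma card_band lo hi : #|band lo hi| = (\sum_(lo <= i < hi.+1) 'C(#|T|, i))%N.
Proof.
under eq_bigr do rewrite -card_draws -sum1dep_card big_mkcond /=.
rewrite exchange_big -sum1dep_card big_mkcond /=; apply: eq_bigr => S _.
rewrite -big_mkcond sum1_count (@eq_count _ _ (pred1 #|S|)) => [|i]; last by rewrite /= eq_sym.
by rewrite count_uniq_mem ?iota_uniq // mem_index_iota ltnS; case: (_ && _).
Qed.

Definition incl_mx lo hi : 'M[R]_(#|band lo hi|, #|F|) :=
  \matrix_(i, j) ((enum_val i : {set T}) \subset (enum_val j : {set T}))%:R.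

Lemma incl_row_sub_band lo hi S : S \in band lo hi -> (incl_row S <= incl_mx lo hi)%MS.
Proof.
move=> Sb; apply: (eq_row_sub (enum_rank_in Sb S)); apply/rowP => j.
by rewrite !mxE (enum_rankK_in Sb Sb).
Qed.

Definition incl_layer (S B : {set T}) r :=
  \sum_(U : {set T} | (U \subset B) && (#|U| == r)) incl_row (S :|: U).

Lemma incl_layerE S B r :
  incl_layer S B r = row_of (fun X => (S \subset X)%:R * 'C(#|B :&: X|, r)%:R).
Proof.
apply/rowP => j; rewrite summxE !mxE -sum_subsets_cap natr_sum mulr_sumr.
apply: eq_bigr => U _; rewrite !mxE subUset.
by case: (S \subset _); rewrite ?mul1r ?mul0r.
Qed.

Lemma incl_layer0 S B : incl_layer S B 0 = incl_row S.
Proof.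
rewrite /incl_layer (big_pred1 set0) ?setU0 // => U; rewrite /= cards_eq0.
by case: (U =P set0) => [->|]; rewrite ?sub0set ?andbF.
Qed.

Lemma incl_layer_comb S B m (q P : nat -> R) :
  (forall y, P y = \sum_(k < m.+1) q k * 'C(y, k)%:R) ->
  \sum_(k < m.+1) q k *: incl_layer S B k = row_of (fun X => (S \subset X)%:R * P #|B :&: X|).
Proof.
move=> hP; apply/rowP => j; rewrite summxE mxE hP mulr_sumr; apply: eq_bigr => k _.
by rewrite incl_layerE !mxE mulrCA.
Qed.

Lemma incl_row_lift lo hi m (W : 'M[R]_(m, #|F|)) (S : {set T}) :
  {in F, forall X : {set T}, lo <= #|X| <= hi}%N -> (#|S| < lo)%N ->
  (forall U : {set T}, U \subset ~: S -> (0 < #|U| <= hi.+1 - lo)%N ->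
     (incl_row (S :|: U) <= W)%MS) ->
  (incl_row S <= W)%MS.
Proof.
move=> bF lt_Slo hW; pose P y := root_prod lo hi (#|S| + y).
have [q hq] := prod_affine_bin_expansion (index_iota lo hi.+1) 1 (fun l => #|S|%:R - l%:R : R).
rewrite size_iota in hq.
have hP y : P y = \sum_(k < (hi.+1 - lo).+1) q k * 'C(y, k)%:R.
  by rewrite -hq /P /root_prod; apply: eq_bigr => l _; rewrite natrD mul1r addrAC addrC.
have q0 : q 0%N != 0 by rewrite (bin_expansion_coef0 hP) /P addn0 root_prod_neq0.
(* [P |X :\: S| = root_prod lo hi |X|] vanishes for every [X] in [F] containing [S]. *)
have rel : \sum_(k < (hi.+1 - lo).+1) q k *: incl_layer S (~: S) k = 0.
  rewrite (incl_layer_comb _ _ hP); apply/rowP => j; rewrite !mxE.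
  set X := enum_val j; have [SX|] := boolP (S \subset X); last by rewrite mul0r.
  rewrite /P root_prod_eq0 ?mulr0 // setIC -setDE cardsD (setIidPr SX) subnKC ?subset_leq_card //.
  exact/bF/enum_valP.
move: rel; rewrite big_ord_recl incl_layer0 => /eqP; rewrite addr_eq0 => /eqP rel.
have -> : incl_row S = (q 0%N)^-1 *: (q 0%N *: incl_row S) by rewrite scalerA mulVf // scale1r.
rewrite rel; apply: scalemx_sub; rewrite -scaleN1r; apply: scalemx_sub.
apply: summx_sub => k _; apply: scalemx_sub; apply: summx_sub => U /andP[US /eqP cU].
by apply: hW; rewrite // cU lift0 /= ltn_ord.
Qed.

Lemma incl_row_sub_low lo hi (S : {set T}) :
  {in F, forall X : {set T}, lo <= #|X| <= hi}%N -> (#|S| <= lo)%N ->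
  (incl_row S <= incl_mx (lo - (hi - lo)) lo)%MS.
Proof.
move=> bF; suff sub_from d (S' : {set T}) : (#|S'| <= lo)%N -> (lo - d <= #|S'|)%N ->
    (incl_row S' <= incl_mx (lo - (hi - lo)) lo)%MS.
  by move=> le_S; apply: (sub_from lo); rewrite ?subnn.
elim: d S' => [|d IH] S' le_S ge_S.
  by apply: incl_row_sub_band; rewrite inE le_S andbT; move: ge_S; rewrite subn0; lia.
have [in_band|below] := leqP (lo - (hi - lo)) #|S'|.
  by apply: incl_row_sub_band; rewrite inE in_band le_S.
apply: (incl_row_lift bF) => [|U US /andP[U_gt0 le_U]]; first lia.
have /eqP SU0 : S' :&: U == set0 by rewrite setI_eq0 disjoint_sym disjoints_subset.
by apply: IH; rewrite cardsU SU0 cards0 subn0; lia.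
Qed.

Lemma root_prod_row_sub t m (W : 'M[R]_(m, #|F|)) (A : {set T}) :
  (forall S : {set T}, (#|S| <= t)%N -> (incl_row S <= W)%MS) ->
  (row_of (fun X => root_prod 1 t #|(A :\: X)%SET|) <= W)%MS.
Proof.
move=> hW.
have [q hq] := prod_affine_bin_expansion (index_iota 1 t.+1) (-1) (fun l => #|A|%:R - l%:R : R).
rewrite size_iota subn1 in hq.
have -> : row_of (fun X => root_prod 1 t #|A :\: X|) = \sum_(k < t.+1) q k *: incl_layer set0 A k.
  rewrite (incl_layer_comb _ _ hq); apply/rowP => j; rewrite !mxE sub0set mul1r.
  apply: eq_bigr => l _; rewrite cardsD natrB ?subset_leq_card ?subsetIl //.
  by rewrite mulN1r addrAC addrC.
apply: summx_sub => k _; apply: scalemx_sub; apply: summx_sub => U /andP[_ /eqP cU].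
by rewrite set0U hW // cU -ltnS.
Qed.
End Inclusion.

Section SkewMatrix.
Import GRing.Theory Num.Theory.
Local Open Scope ring_scope.
Variables (R : numFieldType) (n s : nat) (F : {set {set 'I_n}}).

Definition skew_mx : 'M[R]_#|F| :=
  \matrix_(i, j) root_prod R 1 s #|((enum_val i : {set 'I_n}) :\: enum_val j)%SET|.

Lemma skew_mx_free : close_sperner (range1 s) F -> row_free skew_mx.
Proof.
move=> csF; apply/inj_row_free => v vM0; apply/rowP => i; rewrite mxE.
apply/eqP; apply: contraT => nz_i.
(* Of the sets with a nonzero coefficient take a largest one, [A]: for any other such [B],
   [|B :\: A| <= |A :\: B|], so the skew distance bound puts [|B :\: A|] in [1, s]. *)
have [i0 nz0 max0] :=
  @arg_maxnP _ i (fun k => v 0 k != 0) (fun k => #|(enum_val k : {set 'I_n})|) nz_i.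
have := congr1 (fun w : 'rV_#|F| => w 0 i0) vM0; rewrite !mxE (bigD1 i0) //= big1 ?addr0.
  rewrite mxE setDv cards0 => /eqP.
  by rewrite mulf_eq0 (negbTE nz0) (negbTE (root_prod_neq0 _ _ _)).
move=> k nk; rewrite mxE; have [->|nz_k] := eqVneq (v 0 k) 0; first by rewrite mul0r.
have nA : enum_val k != enum_val i0 :> {set 'I_n} by apply: contra nk => /eqP /enum_val_inj ->.
move: (csF _ _ (enum_valP k) (enum_valP i0) nA); rewrite skew_dist_range1 => /and3P[nsub _ small].
rewrite root_prod_eq0 ?mulr0 // card_gt0 setD_eq0 nsub /=.
by case/orP: small => // /(leq_trans (leq_cardsD_swap (max0 k nz_k))).
Qed.
End SkewMatrix.

Lemma close_sperner_band_bound n s (F : {set {set 'I_n}}) :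
  2 * s <= n -> close_sperner (range1 s) F -> {in F, forall A : {set 'I_n}, s <= #|A| <= n - s} ->
  #|F| <= \sum_(3 * s - n <= i < s.+1) 'C(n, i).
Proof.
move=> le_2sn csF bF.
have band_lo : 3 * s - n = s - (n - s - s) by lia.
have rows_sub : (skew_mx rat s F <= incl_mx rat F (3 * s - n) s)%MS.
  apply/row_subP => i.
  have -> : row i (skew_mx rat s F) =
      row_of F (fun X => root_prod rat 1 s #|((enum_val i : {set 'I_n}) :\: X)%SET|).
    by apply/rowP => j; rewrite !mxE.
  by apply: root_prod_row_sub => S le_S; rewrite band_lo incl_row_sub_low.
have := card_band 'I_n (3 * s - n) s; rewrite card_ord => <-.
rewrite -(eqP (skew_mx_free rat csF)).
exact: leq_trans (mxrankS rows_sub) (rank_leq_row _).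
Qed.

Theorem mainTheorem6 (n s : nat) (F : {set {set 'I_n}}) :
  n + 1 <= 3 * s -> 2 * s <= n ->
  close_sperner (range1 s) F ->
  #|F| <= \sum_(3 * s - n <= i < s.+1) 'C(n, i).
Proof.
move=> _ le_2sn csF.
have [G [csG le_FG bG]] := close_sperner_middle_levels le_2sn csF.
exact: leq_trans le_FG (close_sperner_band_bound le_2sn csG bG).
Qed.
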